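(* For every integer $n\ge 1$, $$\Phi^{(2)}[aq^n; b, b'; c, c'; x, y] = \Phi^{(2)}[a; b, b'; c, c'; x, y] + \frac{ax(1-b)}{1-c} \sum_{k=1}^n q^{k-1} \Phi^{(2)}[aq^k; bq, b'; cq, c'; x, y] + \frac{ay(1-b')}{1-c'} \sum_{k=1}^n q^{k-1} \Phi^{(2)}[aq^k; b, b'q; c, c'q; xq, y]$$ and $$\Phi^{(2)}[aq^{-n}; b, b'; c, c'; x, y] = \Phi^{(2)}[a; b, b'; c, c'; x, y] - \frac{ax(1-b)}{1-c} \sum_{k=1}^n q^{-k} \Phi^{(2)}[aq^{1-k}; bq, b'; cq, c'; x, y] - \frac{ay(1-b')}{1-c'} \sum_{k=1}^n q^{-k} \Phi^{(2)}[aq^{1-k}; b, b'q; c, c'q; xq, y].$$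
   Context: Let $q$ be a complex number with $0<|q|<1$. For complex $z$ and integer $m\ge 0$, $(z;q)_m=\prod_{j=0}^{m-1}(1-zq^j)$, with $(z;q)_0=1$. The $q$-Appell function $\Phi^{(2)}$ is $$\Phi^{(2)}[a; b, b'; c, c'; x, y] = \sum_{m, n \geq 0} \frac{(a; q)_{m+n} (b; q)_m (b'; q)_n}{(q; q)_m (q; q)_n (c; q)_m (c'; q)_n} x^m y^n.$$ Identities are understood as identities of power series in $x,y$ (formal, or convergent for small $|x|,|y|$), with complex parameters chosen so that no denominator occurring vanishes. *)

From mathcomp Require Import all_boot all_order all_algebra.
From mathcomp Require Import reals.
From mathcomp Require Export complex.
Set Implicit Arguments. Unset Strict Implicit. Unset Printing Implicit Defensive.
Import Order.TTheory GRing.Theory Num.Theory.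
Local Open Scope ring_scope.

Section Defs.
Variable C : comUnitRingType.

Definition qpoch (z q : C) (m : nat) : C := \prod_(j < m) (1 - z * q ^+ j).

(* Formal double power series in x, y: coefficient of x^m y^n. *)
Definition fps := nat -> nat -> C.

Definition fps_add (F G : fps) : fps := fun m n => F m n + G m n.
Definition fps_sub (F G : fps) : fps := fun m n => F m n - G m n.
Definition fps_scale (s : C) (F : fps) : fps := fun m n => s * F m n.
Definition fps_mulX (F : fps) : fps :=
  fun m n => if m is m'.+1 then F m' n else 0.
Definition fps_sum1 (N : nat) (F : nat -> fps) : fps :=
  fun m n => \sum_(1 <= k < N.+1) F k m n.
Definition fps_mulY (F : fps) : fps :=
  fun m n => if n is n'.+1 then F m n' else 0.

(* q-Appell function Phi^(2)[a; b, b'; c, c'; sx * x, sy * y] as a formal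
   power series in x, y (sx, sy are scalars multiplying the variables;
   Phi^(2)[...; x, y] is Phi2 ... 1 1 and Phi^(2)[...; xq, y] is Phi2 ... q 1). *)
Definition Phi2 (q a b b' c c' sx sy : C) : fps :=
  fun m n => qpoch a q (m + n) * qpoch b q m * qpoch b' q n
             / (qpoch q q m * qpoch q q n * qpoch c q m * qpoch c' q n)
             * sx ^+ m * sy ^+ n.
End Defs.

(* Since (aq;q)_N - (a;q)_N = a (1 - q^N) (aq;q)_(N-1) and
   1 - q^(m+n) = (1 - q^m) + q^m (1 - q^n), raising a to aq changes Phi^(2) by
   an x-multiple of a series with (b, c) raised to (bq, cq) plus a y-multiple of
   one with (b', c') raised and x replaced by xq.  Iterating this contiguous
   relation at a, aq, ..., aq^(n-1) (resp. at aq^-1, ..., aq^-n) telescopes to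
   both identities. *)

From mathcomp Require Import all_boot all_order all_algebra.
From mathcomp Require Import reals complex.
From mathcomp Require Import ring boolp.
Set Implicit Arguments. Unset Strict Implicit. Unset Printing Implicit Defensive.
Import Order.TTheory GRing.Theory Num.Theory.
Local Open Scope ring_scope.

Section QPochhammer.
Variable R : comUnitRingType.
Implicit Types z q : R.

Lemma qpoch0 z q : qpoch z q 0 = 1.
Proof. by rewrite /qpoch big_ord0. Qed.

Lemma qpochS z q m : qpoch z q m.+1 = (1 - z) * qpoch (z * q) q m.
Proof.
rewrite /qpoch big_ord_recl expr0 mulr1; congr (_ * _).
by apply: eq_bigr => i _; rewrite /= exprS mulrA.
Qed.

Lemma qpochSr z q m : qpoch z q m.+1 = qpoch z q m * (1 - z * q ^+ m).
Proof. by rewrite /qpoch big_ord_recr. Qed.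

Lemma qpoch_shift z q m :
  qpoch (z * q) q m.+1 = qpoch z q m.+1 + z * (1 - q ^+ m.+1) * qpoch (z * q) q m.
Proof. by rewrite qpochSr qpochS exprS; ring. Qed.

End QPochhammer.

Lemma qpoch_neq0 (R : idomainType) (z q : R) m :
  (forall j, z * q ^+ j != 1) -> qpoch z q m != 0.
Proof. by move=> hz; apply/prodf_neq0 => j _; rewrite subr_eq0 eq_sym. Qed.

Section FormalSeries.
Variable R : comUnitRingType.

Lemma fps_ext (F G : fps R) : (forall i j, F i j = G i j) -> F = G.
Proof. by move=> FG; apply/funext => i; apply/funext => j; apply: FG. Qed.

Lemma fps_scaleA (s r : R) (F : fps R) :
  fps_scale s (fps_scale r F) = fps_scale (s * r) F.
Proof. by apply: fps_ext => i j; rewrite /fps_scale mulrA. Qed.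

Lemma fps_mulX_scale (r : R) (F : fps R) :
  fps_mulX (fps_scale r F) = fps_scale r (fps_mulX F).
Proof. by apply: fps_ext => -[|i] j; rewrite /fps_scale //= mulr0. Qed.

Lemma fps_mulY_scale (r : R) (F : fps R) :
  fps_mulY (fps_scale r F) = fps_scale r (fps_mulY F).
Proof. by apply: fps_ext => i -[|j]; rewrite /fps_scale //= mulr0. Qed.

Section Telescoping.
Variables (F G H : nat -> fps R) (s t : R).

Lemma fps_telescope_up :
  (forall k, F k.+1 = fps_add (fps_add (F k) (fps_scale s (fps_mulX (G k.+1))))
                        (fps_scale t (fps_mulY (H k.+1)))) ->
  forall n, F n = fps_add (fps_add (F 0) (fps_scale s (fps_mulX (fps_sum1 n G))))
                    (fps_scale t (fps_mulY (fps_sum1 n H))).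
Proof.
move=> FS; elim=> [|n IH]; apply: fps_ext => i j;
  rewrite /fps_add /fps_scale /fps_mulX /fps_mulY /fps_sum1.
  by case: i => [|i]; case: j => [|j]; rewrite ?big_geq //; ring.
rewrite FS IH /fps_add /fps_scale /fps_mulX /fps_mulY /fps_sum1.
by case: i => [|i]; case: j => [|j]; rewrite ?(big_nat_recr n.+1) //=; ring.
Qed.

Lemma fps_telescope_down :
  (forall k, F k = fps_add (fps_add (F k.+1) (fps_scale s (fps_mulX (G k.+1))))
                     (fps_scale t (fps_mulY (H k.+1)))) ->
  forall n, F n = fps_sub (fps_sub (F 0) (fps_scale s (fps_mulX (fps_sum1 n G))))
                    (fps_scale t (fps_mulY (fps_sum1 n H))).
Proof.
move=> FS; elim=> [|n IH]; apply: fps_ext => i j;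
  rewrite /fps_sub /fps_scale /fps_mulX /fps_mulY /fps_sum1.
  by case: i => [|i]; case: j => [|j]; rewrite ?big_geq //; ring.
move: (congr1 (fun f => f i j) (FS n)).
rewrite IH /fps_add /fps_sub /fps_scale /fps_mulX /fps_mulY /fps_sum1 /=.
move/eqP; rewrite -subr_eq -subr_eq => /eqP <-.
by case: i => [|i]; case: j => [|j]; rewrite ?(big_nat_recr n.+1) //=; ring.
Qed.

End Telescoping.

End FormalSeries.

Lemma normr_lt1_exprS_neq1 (R : numDomainType) (x : R) j :
  `|x| < 1 -> x ^+ j.+1 != 1.
Proof.
move=> x_lt1; apply/eqP => x1.
have : `|x| ^+ j.+1 < 1 by rewrite exprn_ilt1.
by rewrite -normrX x1 normr1 ltxx.
Qed.

Section Contiguous.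
Variables (K : fieldType) (q b b' c c' : K).
Hypothesis q_not_root1 : forall j, q ^+ j.+1 != 1.
Hypothesis hc : forall j, c * q ^+ j != 1.
Hypothesis hc' : forall j, c' * q ^+ j != 1.
Hypothesis q_neq0 : q != 0.

Lemma Phi2_contiguous a :
  Phi2 q (a * q) b b' c c' 1 1 =
    fps_add (fps_add (Phi2 q a b b' c c' 1 1)
      (fps_scale (a * (1 - b) / (1 - c))
        (fps_mulX (Phi2 q (a * q) (b * q) b' (c * q) c' 1 1))))
      (fps_scale (a * (1 - b') / (1 - c'))
        (fps_mulY (Phi2 q (a * q) b (b' * q) c (c' * q) q 1))).
Proof.
have qq_neq0 k : qpoch q q k != 0.
  by apply: qpoch_neq0 => j; rewrite -exprS.
have cq_neq0 k : qpoch (c * q) q k != 0.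
  by apply: qpoch_neq0 => j; rewrite -mulrA -exprS.
have c'q_neq0 k : qpoch (c' * q) q k != 0.
  by apply: qpoch_neq0 => j; rewrite -mulrA -exprS.
have c_neq1 : 1 - c != 0 by rewrite subr_eq0 eq_sym -[c]mulr1 -(expr0 q).
have c'_neq1 : 1 - c' != 0 by rewrite subr_eq0 eq_sym -[c']mulr1 -(expr0 q).
have qS_neq1 k : 1 - q * q ^+ k != 0 by rewrite subr_eq0 eq_sym -exprS.
have nz := (qq_neq0, cq_neq0, c'q_neq0, c_neq1, c'_neq1, qS_neq1).
apply: fps_ext => i j.
rewrite /fps_add /fps_scale /fps_mulX /fps_mulY /Phi2.
case: i => [|i]; case: j => [|j] /=;
  rewrite ?addn0 ?add0n ?addSn ?addnS !expr1n ?expr0 !mulr1 ?mulr0 ?addr0.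
- by rewrite !qpoch0.
- rewrite {1}qpoch_shift !qpoch0 exprS (qpochSr q q j) (qpochS b') (qpochS c').
  by field; rewrite ?nz.
- rewrite {1}qpoch_shift !qpoch0 exprS (qpochSr q q i) (qpochS b) (qpochS c).
  by field; rewrite ?nz.
- rewrite {1}qpoch_shift (qpochSr q q i) (qpochS b) (qpochS c).
  rewrite (qpochSr q q j) (qpochS b') (qpochS c') !exprS exprD.
  by field; rewrite ?nz.
Qed.

Lemma Phi2_shift_up a n :
  Phi2 q (a * q ^+ n) b b' c c' 1 1 =
    fps_add (fps_add (Phi2 q a b b' c c' 1 1)
      (fps_scale (a * (1 - b) / (1 - c))
        (fps_mulX (fps_sum1 n (fun k =>
           fps_scale (q ^+ (k - 1)) (Phi2 q (a * q ^+ k) (b * q) b' (c * q) c' 1 1))))))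
      (fps_scale (a * (1 - b') / (1 - c'))
        (fps_mulY (fps_sum1 n (fun k =>
           fps_scale (q ^+ (k - 1)) (Phi2 q (a * q ^+ k) b (b' * q) c (c' * q) q 1))))).
Proof.
pose F k := Phi2 q (a * q ^+ k) b b' c c' 1 1.
have -> : Phi2 q a b b' c c' 1 1 = F 0 by rewrite /F expr0 mulr1.
apply: (fps_telescope_up (F := F)) => k.
rewrite /F subn1 /= exprSr mulrA Phi2_contiguous.
rewrite fps_mulX_scale fps_mulY_scale !fps_scaleA.
by congr (fps_add (fps_add _ (fps_scale _ _)) (fps_scale _ _)); ring.
Qed.

Lemma Phi2_shift_down a n :
  Phi2 q (a * q ^- n) b b' c c' 1 1 =
    fps_sub (fps_sub (Phi2 q a b b' c c' 1 1)
      (fps_scale (a * (1 - b) / (1 - c))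
        (fps_mulX (fps_sum1 n (fun k =>
           fps_scale (q ^- k) (Phi2 q (a * q ^- (k - 1)) (b * q) b' (c * q) c' 1 1))))))
      (fps_scale (a * (1 - b') / (1 - c'))
        (fps_mulY (fps_sum1 n (fun k =>
           fps_scale (q ^- k) (Phi2 q (a * q ^- (k - 1)) b (b' * q) c (c' * q) q 1))))).
Proof.
pose F k := Phi2 q (a * q ^- k) b b' c c' 1 1.
have -> : Phi2 q a b b' c c' 1 1 = F 0 by rewrite /F expr0 invr1 mulr1.
apply: (fps_telescope_down (F := F)) => k.
have shift : a * q ^- k = a * q ^- k.+1 * q.
  by rewrite exprSr invfM -!mulrA mulVf ?mulr1.
rewrite /F subn1 /= shift Phi2_contiguous.
rewrite fps_mulX_scale fps_mulY_scale !fps_scaleA.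
by congr (fps_add (fps_add _ (fps_scale _ _)) (fps_scale _ _)); ring.
Qed.

End Contiguous.

Theorem theorem6 (R : realType) (q a b b' c c' : R[i])
  (hq0 : 0 < `|q|) (hq1 : `|q| < 1)
  (hc : forall j : nat, c * q ^+ j != 1)
  (hc' : forall j : nat, c' * q ^+ j != 1)
  (n : nat) (hn : (1 <= n)%N) :
  Phi2 q (a * q ^+ n) b b' c c' 1 1 =
    fps_add (fps_add (Phi2 q a b b' c c' 1 1)
      (fps_scale (a * (1 - b) / (1 - c))
        (fps_mulX (fps_sum1 n (fun k =>
           fps_scale (q ^+ (k - 1)) (Phi2 q (a * q ^+ k) (b * q) b' (c * q) c' 1 1))))))
      (fps_scale (a * (1 - b') / (1 - c'))
        (fps_mulY (fps_sum1 n (fun k =>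
           fps_scale (q ^+ (k - 1)) (Phi2 q (a * q ^+ k) b (b' * q) c (c' * q) q 1)))))
  /\
  Phi2 q (a * q ^- n) b b' c c' 1 1 =
    fps_sub (fps_sub (Phi2 q a b b' c c' 1 1)
      (fps_scale (a * (1 - b) / (1 - c))
        (fps_mulX (fps_sum1 n (fun k =>
           fps_scale (q ^- k) (Phi2 q (a * q ^- (k - 1)) (b * q) b' (c * q) c' 1 1))))))
      (fps_scale (a * (1 - b') / (1 - c'))
        (fps_mulY (fps_sum1 n (fun k =>
           fps_scale (q ^- k) (Phi2 q (a * q ^- (k - 1)) b (b' * q) c (c' * q) q 1))))).
Proof.
have q_not_root1 j : q ^+ j.+1 != 1 by exact: normr_lt1_exprS_neq1.
have q_neq0 : q != 0 by rewrite -normr_gt0.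
by split; [apply: Phi2_shift_up | apply: Phi2_shift_down].
Qed.
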